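(* Let $\mathcal{F}$ be a $(G,[k_1,\dots,k_t],\lambda)$ Hadamard partitioned difference family. Then (i) $k_1+\cdots+k_t=2\lambda$; (ii) $k_1^2+\cdots+k_t^2=\lambda(2\lambda+1)$; (iii) $\lambda$ is even, hence $|G|\equiv 0 \pmod 4$.
   Context: $G$ is a finite group written additively, with difference $x-y:=x+(-y)$. For $B\subseteq G$, $\Delta B$ is the multiset $\{x-y: x,y\in B, x\neq y\}$; for $\mathcal{F}=\{B_1,\dots,B_t\}$, $\Delta\mathcal{F}$ is the multiset union of the $\Delta B_i$. $\mathcal{F}$ is a $(G,[k_1,\dots,k_t],\lambda)$ partitioned difference family (PDF) if the $B_i$ partition $G$, $|B_i|=k_i$, and $\Delta\mathcal{F}$ contains every non-zero element of $G$ exactly $\lambda$ times. It is Hadamard (HPDF) if $|G|=2\lambda$. *)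

From mathcomp Require Import all_boot all_order all_algebra.
Set Implicit Arguments. Unset Strict Implicit. Unset Printing Implicit Defensive.
Import GRing.Theory.
Local Open Scope ring_scope.

Definition diff_mult (G : finZmodType) (B : {set G}) (g : G) : nat :=
  #|[set p in setX B B | (p.1 != p.2) && (p.1 - p.2 == g)]|.

Definition is_PDF (G : finZmodType) (t : nat) (B : 'I_t -> {set G})
    (k : 'I_t -> nat) (lambda : nat) : Prop :=
  [/\ (forall i, B i != set0),
      (forall i j, i != j -> [disjoint B i & B j]),
      \bigcup_(i < t) B i = [set: G],
      (forall i, #|B i| = k i)
    & (forall g : G, g != 0 -> (\sum_(i < t) diff_mult (B i) g)%N = lambda)].

Definition is_HPDF (G : finZmodType) (t : nat) (B : 'I_t -> {set G})
    (k : 'I_t -> nat) (lambda : nat) : Prop :=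
  is_PDF B k lambda /\ #|G| = (2 * lambda)%N.

From mathcomp Require Import all_boot all_order all_algebra.
From mathcomp Require Import zify.
Import GRing.Theory.

(* Double counting: every block of size k contributes k (k - 1) ordered pairs of
   distinct elements, each giving one non-zero difference, and each of the
   |G| - 1 non-zero differences is obtained lambda times.  With |G| = 2 lambda
   and sum k_i = |G| this yields the sum of squares, and since every k^2 has the
   parity of k, lambda (2 lambda + 1) has the parity of 2 lambda, i.e. lambda is
   even. *)

Lemma card_offdiag (T : finType) (A : {set T}) :
  #|[set p in setX A A | p.1 != p.2]| = #|A| * #|A|.-1.
Proof.
have diagE : setX A A :&: [set p | p.1 == p.2] = [set (x, x) | x in A].
  apply/setP => -[x y]; rewrite !inE /=; apply/idP/imsetP.
    by case/andP=> /andP[xA _] /eqP <-; exists x.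
  by case=> z zA [-> ->]; rewrite zA eqxx.
have offdiagE : setX A A :\: [set p | p.1 == p.2] = [set p in setX A A | p.1 != p.2].
  by apply/setP => p; rewrite !inE andbC.
have := cardsID [set p | p.1 == p.2] (setX A A).
rewrite diagE offdiagE cardsX card_imset; last by move=> x y [].
rewrite -subn1 mulnBr muln1; lia.
Qed.

Lemma sum_diff_mult (G : finZmodType) (B : {set G}) :
  \sum_(g : G | g != 0%R) diff_mult B g = #|B| * #|B|.-1.
Proof.
rewrite -card_offdiag -sum1_card.
rewrite (partition_big (fun p : G * G => (p.1 - p.2)%R) (fun g => g != 0%R)) /=.
  apply: eq_bigr => g _; rewrite /diff_mult -sum1_card.
  by apply: eq_bigl => p; rewrite !inE andbA.
by move=> p; rewrite inE subr_eq0 => /andP[].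
Qed.

Lemma sum_card_disjoint_cover {T : finType} {t : nat} {B : 'I_t -> {set T}} :
  (forall i j, i != j -> [disjoint B i & B j]) ->
  \bigcup_(i < t) B i = [set: T] ->
  \sum_(i < t) #|B i| = #|T|.
Proof.
move=> disjB coverB.
have in_one_block (x : T) : \sum_(i < t) (x \in B i) = 1.
  have : x \in \bigcup_(i < t) B i by rewrite coverB inE.
  case/bigcupP=> i _ xBi; rewrite (bigD1 i) //= xBi big1 // => j ji.
  by case: (boolP (x \in B j)) => // /(disjointFr (disjB _ _ ji)); rewrite xBi.
rewrite -sum1_card (eq_bigr _ (fun x _ => esym (in_one_block x))).
rewrite exchange_big; apply: eq_bigr => i _.
by rewrite -sum1_card big_mkcond.
Qed.

Lemma odd_sum_sqr {I : finType} (f : I -> nat) :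
  odd (\sum_i f i ^ 2) = odd (\sum_i f i).
Proof. by elim/big_rec2: _ => // i m n _ IH; rewrite !oddD oddX IH. Qed.

Section PartitionedDifferenceFamily.

Context {G : finZmodType} {t : nat} {B : 'I_t -> {set G}}.
Context {k : 'I_t -> nat} {lambda : nat}.
Hypothesis PDF_B : is_PDF B k lambda.

Lemma PDF_sum_sizes : \sum_(i < t) k i = #|G|.
Proof.
case: PDF_B => _ disjB coverB sizeB _.
rewrite -(sum_card_disjoint_cover disjB coverB).
by apply: eq_bigr => i _; rewrite sizeB.
Qed.

Lemma PDF_sum_pairs : \sum_(i < t) k i * (k i).-1 = lambda * #|G|.-1.
Proof.
case: PDF_B => _ _ _ sizeB diffB.
transitivity (\sum_(g : G | g != 0%R) \sum_(i < t) diff_mult (B i) g).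
  by rewrite exchange_big; apply: eq_bigr => i _; rewrite sum_diff_mult sizeB.
rewrite (eq_bigr _ diffB) sum_nat_const mulnC.
by congr (_ * _); rewrite -(cardC1 0%R); apply: eq_card.
Qed.

End PartitionedDifferenceFamily.

Theorem proposition3p1 (G : finZmodType) (t : nat) (B : 'I_t -> {set G})
    (k : 'I_t -> nat) (lambda : nat) :
  is_HPDF B k lambda ->
  [/\ (\sum_(i < t) k i)%N = (2 * lambda)%N,
      (\sum_(i < t) k i ^ 2)%N = (lambda * (2 * lambda + 1))%N,
      ~~ odd lambda
    & (#|G| %% 4 = 0)%N].
Proof.
case=> PDF_B cardG.
have sum_k : \sum_(i < t) k i = 2 * lambda by rewrite (PDF_sum_sizes PDF_B).
have sum_k2 : \sum_(i < t) k i ^ 2 = lambda * (2 * lambda + 1).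
  have sqrE (n : nat) : n ^ 2 = n * n.-1 + n by case: n => // n; lia.
  rewrite (eq_bigr _ (fun i _ => sqrE (k i))) big_split /=.
  rewrite (PDF_sum_pairs PDF_B) sum_k cardG.
  by case: (lambda) => // l; lia.
have even_lambda : ~~ odd lambda.
  have := odd_sum_sqr k; rewrite sum_k sum_k2 oddM oddD oddM /= andbT.
  by move->.
split=> //; rewrite cardG.
by move: even_lambda; rewrite -dvdn2 => /dvdnP[m ->]; lia.
Qed.
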